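(* There exists a set $\mathfrak T$ of green graph rewriting rules which does not lead to the red spider, but finitely leads to the red spider.
   Context: Fix a positive integer $s$ and let $\mathbb S=\{1,\dots,s\}$ and $\bar{\mathbb S}=\mathbb S\cup\{\emptyset\}$ (elements of $\mathbb S$ are natural numbers, called labels). A green graph is a (finite or infinite) relational structure over the signature consisting of binary relations $H_i$, $i\in\bar{\mathbb S}$; an atom $H_i(x,y)$ is called an edge from $x$ to $y$ labelled $i$. A green graph rewriting rule is a first-order sentence of one of the following two kinds, where $I_1,I_2,I_3,I_4\in\bar{\mathbb S}\setminus\{3,4\}$, $I_1\neq I_3$ and $I_2\neq I_4$: (end-sharing rule) $[I_1,I_2\leftrightarrow I_3,I_4]_{\mathrm{end}}$ denotes $\forall x,x'\,\big[(\exists y\,H_{I_1}(x,y)\wedge H_{I_2}(x',y))\Leftrightarrow(\exists y\,H_{I_3}(x,y)\wedge H_{I_4}(x',y))\big]$; (start-sharing rule) $[I_1,I_2\leftrightarrow I_3,I_4]_{\mathrm{start}}$ denotes $\forall y,y'\,\big[(\exists x\,H_{I_1}(x,y)\wedge H_{I_2}(x,y'))\Leftrightarrow(\exists x\,H_{I_3}(x,y)\wedge H_{I_4}(x,y'))\big]$. A green graph contains a 1-2 pattern if it has edges $H_1(a,b)$ and $H_2(a',b)$ for some vertices $a,a',b$. A set $\mathcal T$ of green graph rewriting rules leads to the red spider (resp. finitely leads to the red spider) if every green graph (resp. every finite green graph) $\mathbb D$ with $\mathbb D\models\mathcal T$ which contains at least one edge labelled $\emptyset$ also contains a 1-2 pattern.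 *)

From Stdlib Require Import List Arith.

(* Labels: [None] is the label ∅, [Some i] is the natural-number label i.
   A label is valid for parameter s if it lies in S̄ = {1..s} ∪ {∅}. *)
Definition label := option nat.

Definition valid_label (s : nat) (l : label) : Prop :=
  match l with
  | None => True
  | Some i => 1 <= i /\ i <= s
  end.

(* We represent it as a family indexed by all of [label], required to be
   empty outside S̄ (so only the signature's relations carry edges). *)
Definition green_graph (s : nat) {V : Type} (H : label -> V -> V -> Prop) : Prop :=
  forall l x y, H l x y -> valid_label s l.

Definition finite_type (V : Type) : Prop := exists l : list V, forall x, In x l.

Inductive rule_kind := End_sharing | Start_sharing.

Record rule := mkRule {
  r_kind : rule_kind;
  r_I1 : label; r_I2 : label; r_I3 : label; r_I4 : label }.

Definition rule_label (s : nat) (l : label) : Prop :=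
  valid_label s l /\ l <> Some 3 /\ l <> Some 4.

Definition wf_rule (s : nat) (r : rule) : Prop :=
  rule_label s (r_I1 r) /\ rule_label s (r_I2 r) /\
  rule_label s (r_I3 r) /\ rule_label s (r_I4 r) /\
  r_I1 r <> r_I3 r /\ r_I2 r <> r_I4 r.

Definition satisfies {V : Type} (H : label -> V -> V -> Prop) (r : rule) : Prop :=
  match r_kind r with
  | End_sharing =>
      forall x x' : V,
        (exists y, H (r_I1 r) x y /\ H (r_I2 r) x' y) <->
        (exists y, H (r_I3 r) x y /\ H (r_I4 r) x' y)
  | Start_sharing =>
      forall y y' : V,
        (exists x, H (r_I1 r) x y /\ H (r_I2 r) x y') <->
        (exists x, H (r_I3 r) x y /\ H (r_I4 r) x y')
  end.

Definition models {V : Type} (H : label -> V -> V -> Prop) (T : rule -> Prop) : Prop :=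
  forall r, T r -> satisfies H r.

Definition has_12_pattern {V : Type} (H : label -> V -> V -> Prop) : Prop :=
  exists a a' b, H (Some 1) a b /\ H (Some 2) a' b.

Definition has_empty_edge {V : Type} (H : label -> V -> V -> Prop) : Prop :=
  exists x y, H None x y.

Definition leads_to_red_spider (s : nat) (T : rule -> Prop) : Prop :=
  forall (V : Type) (H : label -> V -> V -> Prop),
    green_graph s H -> models H T -> has_empty_edge H -> has_12_pattern H.

Definition finitely_leads_to_red_spider (s : nat) (T : rule -> Prop) : Prop :=
  forall (V : Type) (H : label -> V -> V -> Prop),
    finite_type V ->
    green_graph s H -> models H T -> has_empty_edge H -> has_12_pattern H.

From Stdlib Require Import List Arith Lia Relations IndefiniteDescription Classical.
Set Implicit Arguments.

(* An ∅-edge out of u yields edges u -5-> y0 and u -8-> y0, and by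
   [1,2 <-> 8,6]_end a 1-2 pattern follows as soon as y0 has a
   6-predecessor.  The other rules let every vertex with a 5-edge take a "step" x -6-> y <-5- x', so a
   finite graph contains a walk u = f 0, f 1, ... that repeats a vertex.
   Let ~5 (resp. ~6) be the equivalence generated by sharing a 5-target
   (resp. a 6-source).  The rules make 6-predecessors of ~6-equivalent
   vertices ~5-equivalent, and 5-successors of ~5-equivalent vertices
   ~6-equivalent once one of them has a 6-predecessor; so a step can be
   cancelled modulo ~5, and the repetition gives u ~5 f (m+1) for some m.
   Since f (m+1) has a 5-successor with a 6-predecessor, y0 is ~6-equivalent
   to it and therefore also has a 6-predecessor.

   In the infinite "ladder" below the walk runs off to infinity, the 7-edge
   at the bottom rung is missing, and no 1- or 2-edges exist at all. *)

Lemma finite_type_collision (V : Type) (f : nat -> V) :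
  finite_type V -> exists i j, i < j /\ f i = f j.
Proof.
  intros [l Hl]; apply NNPP; intro no_collision.
  assert (f_inj : forall i j, f i = f j -> i = j).
  { intros i j E; destruct (Nat.lt_total i j) as [h | [h | h]]; auto;
      exfalso; apply no_collision; eauto. }
  assert (nodup : NoDup (map f (seq 0 (S (length l))))).
  { apply NoDup_map_NoDup_ForallPairs; [intros a b _ _; apply f_inj | apply seq_NoDup]. }
  pose proof (NoDup_incl_length nodup (fun x _ => Hl x)) as len.
  rewrite length_map, length_seq in len; lia.
Qed.

Lemma serial_path (V : Type) (P : V -> Prop) (R : V -> V -> Prop) (x0 : V) :
  (forall x, P x -> exists x', R x x' /\ P x') -> P x0 ->
  exists f : nat -> V, f 0 = x0 /\ forall n, R (f n) (f (S n)).
Proof.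
  intros serial P0.
  destruct (functional_choice
              (fun s s' : {x | P x} => R (proj1_sig s) (proj1_sig s')))
    as [g Hg].
  { intros [x Px]; destruct (serial x Px) as [x' [Rx Px']].
    now exists (exist _ x' Px'). }
  exists (fun n => proj1_sig (Nat.iter n g (exist _ x0 P0))).
  split; [reflexivity | intro n; apply Hg].
Qed.

Lemma path_cancel_prefix (V : Type) (R E : V -> V -> Prop) (f : nat -> V) :
  (forall n, R (f n) (f (S n))) ->
  (forall a c a' c', R a c -> R a' c' -> E c c' -> E a a') ->
  forall k i j, E (f (k + i)) (f (k + j)) -> E (f i) (f j).
Proof.
  intros path cancel k; induction k as [|k IH]; intros i j E_ij; [exact E_ij|].
  apply IH, (cancel _ _ _ _ (path (k + i)) (path (k + j)) E_ij).
Qed.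

Section FiniteGraphs.

Variable V : Type.
Variable H : label -> V -> V -> Prop.

Hypothesis sat_12_86 : forall x x',
  (exists y, H (Some 1) x y /\ H (Some 2) x' y) <->
  (exists y, H (Some 8) x y /\ H (Some 6) x' y).
Hypothesis sat_55_66 : forall x x',
  (exists y, H (Some 5) x y /\ H (Some 5) x' y) <->
  (exists y, H (Some 6) x y /\ H (Some 6) x' y).
Hypothesis sat_57_75 : forall x x',
  (exists y, H (Some 5) x y /\ H (Some 7) x' y) <->
  (exists y, H (Some 7) x y /\ H (Some 5) x' y).
Hypothesis sat_75_66 : forall y y',
  (exists x, H (Some 7) x y /\ H (Some 5) x y') <->
  (exists x, H (Some 6) x y /\ H (Some 6) x y').
Hypothesis sat_ee_58 : forall x x',
  (exists y, H None x y /\ H None x' y) <->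
  (exists y, H (Some 5) x y /\ H (Some 8) x' y).

Definition share5 x x' := exists y, H (Some 5) x y /\ H (Some 5) x' y.
Definition share6 y y' := exists x, H (Some 6) x y /\ H (Some 6) x y'.
Definition eq5 := clos_refl_sym_trans V share5.
Definition eq6 := clos_refl_sym_trans V share6.
Definition has_pred6 y := exists x, H (Some 6) x y.
Definition has_succ5 x := exists y, H (Some 5) x y.
Definition step x x' := exists y, H (Some 6) x y /\ H (Some 5) x' y.

Lemma has_pred6_eq6 y y' : eq6 y y' -> has_pred6 y -> has_pred6 y'.
Proof.
  intro E; apply clos_rst_rst1n in E; induction E as [|y y' z Eyy' _ IH]; auto.
  intros _; apply IH.
  destruct Eyy' as [[x [_ Hx]] | [x [Hx _]]]; now exists x.
Qed.

Lemma share6_of_7_5 z d b : H (Some 7) z d -> H (Some 5) z b -> share6 d b.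
Proof. intros H7 H5; apply sat_75_66; eauto. Qed.

Lemma has_succ7 z w : H (Some 5) z w -> has_pred6 w -> exists d, H (Some 7) z d.
Proof.
  intros H5 [x H6].
  destruct (proj2 (sat_75_66 w w) (ex_intro _ x (conj H6 H6))) as [a [A7 _]].
  destruct (proj1 (sat_57_75 z a) (ex_intro _ w (conj H5 A7))) as [d [D7 _]].
  eauto.
Qed.

Definition succ5_in_class c z := forall b, H (Some 5) z b -> eq6 b c.

Lemma succ5_in_class_init c y :
  H (Some 5) c y -> has_pred6 y -> succ5_in_class y c.
Proof.
  intros H5 Py; destruct (has_succ7 H5 Py) as [d D7].
  intros b Hb; apply rst_trans with d.
  - apply rst_sym, rst_step, (share6_of_7_5 D7 Hb).
  - apply rst_step, (share6_of_7_5 D7 H5).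
Qed.

Lemma succ5_in_class_share5 c z z' :
  has_pred6 c -> share5 z z' -> succ5_in_class c z -> succ5_in_class c z'.
Proof.
  intros Pc [w [Hz Hz']] G b Hb.
  assert (Ew : eq6 w c) by now apply G.
  assert (Pw : has_pred6 w) by exact (has_pred6_eq6 (rst_sym _ _ _ _ Ew) Pc).
  destruct (has_succ7 Hz' Pw) as [d D7].
  apply rst_trans with d; [apply rst_sym, rst_step, (share6_of_7_5 D7 Hb)|].
  apply rst_trans with w; [apply rst_step, (share6_of_7_5 D7 Hz') | exact Ew].
Qed.

Lemma succ5_in_class_eq5 c z z' :
  has_pred6 c -> eq5 z z' -> (succ5_in_class c z <-> succ5_in_class c z').
Proof.
  intros Pc E; induction E as [z z' [w [Hz Hz']] | | |]; try tauto.
  split; apply succ5_in_class_share5; auto; now exists w.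
Qed.

Lemma eq5_succ5_eq6 z z' b b' :
  eq5 z z' -> H (Some 5) z b -> has_pred6 b -> H (Some 5) z' b' -> eq6 b' b.
Proof.
  intros E Hb Pb Hb'.
  exact (proj1 (succ5_in_class_eq5 Pb E) (succ5_in_class_init Hb Pb) b' Hb').
Qed.

Lemma eq6_pred6_eq5 b b' a a' :
  eq6 b b' -> H (Some 6) a b -> H (Some 6) a' b' -> eq5 a a'.
Proof.
  intro E; apply clos_rst_rst1n in E; revert a.
  induction E as [b | b y b' Eby _ IH]; intros a Ha Ha'.
  - apply rst_step, sat_55_66; eauto.
  - assert (Hs : exists s, H (Some 6) s b /\ H (Some 6) s y)
      by (destruct Eby as [[s []] | [s []]]; eauto).
    destruct Hs as [s [Hsb Hsy]].
    apply rst_trans with s; [apply rst_step, sat_55_66; eauto | now apply IH].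
Qed.

Lemma step_cancel a c a' c' : step a c -> step a' c' -> eq5 c c' -> eq5 a a'.
Proof.
  intros [y [Ha Hc]] [y' [Ha' Hc']] E.
  assert (Py : has_pred6 y) by now exists a.
  exact (eq6_pred6_eq5 (rst_sym _ _ _ _ (eq5_succ5_eq6 E Hc Py Hc')) Ha Ha').
Qed.

Lemma step_serial x : has_succ5 x -> exists x', step x x' /\ has_succ5 x'.
Proof.
  intros [y Hy].
  destruct (proj1 (sat_55_66 x x) (ex_intro _ y (conj Hy Hy))) as [z [Hz _]].
  destruct (proj2 (sat_75_66 z z) (ex_intro _ x (conj Hz Hz))) as [x' [_ Hx']].
  exists x'; split; exists z; auto.
Qed.

Lemma finite_12_pattern : finite_type V -> has_empty_edge H -> has_12_pattern H.
Proof.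
  intros fin [u [v Huv]].
  destruct (proj1 (sat_ee_58 u u) (ex_intro _ v (conj Huv Huv))) as [y0 [U5 U8]].
  destruct (serial_path has_succ5 step u step_serial (ex_intro _ y0 U5)) as [f [f0 path]].
  destruct (finite_type_collision f fin) as [i [j [Hij Efij]]].
  assert (Eu : eq5 u (f (S (j - S i)))).
  { rewrite <- f0; apply (path_cancel_prefix step eq5 f path step_cancel i).
    replace (i + S (j - S i)) with j by lia; rewrite Nat.add_0_r, Efij; apply rst_refl. }
  destruct (path (j - S i)) as [y [Hy6 Hy5]].
  assert (Py : has_pred6 y) by now exists (f (j - S i)).
  assert (Ey0 : eq6 y y0) by exact (rst_sym _ _ _ _ (eq5_succ5_eq6 (rst_sym _ _ _ _ Eu) Hy5 Py U5)).
  destruct (has_pred6_eq6 Ey0 Py) as [x Hx].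
  destruct (proj2 (sat_12_86 u x) (ex_intro _ y0 (conj U8 Hx))) as [w [W1 W2]].
  now exists u, x, w.
Qed.

End FiniteGraphs.

Definition rule_12_86 := mkRule End_sharing (Some 1) (Some 2) (Some 8) (Some 6).
Definition rule_55_66 := mkRule End_sharing (Some 5) (Some 5) (Some 6) (Some 6).
Definition rule_57_75 := mkRule End_sharing (Some 5) (Some 7) (Some 7) (Some 5).
Definition rule_75_66 := mkRule Start_sharing (Some 7) (Some 5) (Some 6) (Some 6).
Definition rule_ee_58 := mkRule End_sharing None None (Some 5) (Some 8).

Definition spider_rules (r : rule) : Prop :=
  r = rule_12_86 \/ r = rule_55_66 \/ r = rule_57_75 \/ r = rule_75_66 \/ r = rule_ee_58.

Lemma spider_rules_wf r : spider_rules r -> wf_rule 8 r.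
Proof.
  intros [-> | [-> | [-> | [-> | ->]]]]; unfold wf_rule, rule_label; cbn;
    repeat split; try lia; discriminate.
Qed.

Lemma spider_rules_finitely_lead : finitely_leads_to_red_spider 8 spider_rules.
Proof.
  intros V H fin _ M; apply finite_12_pattern; auto.
  - exact (M _ (or_introl eq_refl)).
  - exact (M _ (or_intror (or_introl eq_refl))).
  - exact (M _ (or_intror (or_intror (or_introl eq_refl)))).
  - exact (M _ (or_intror (or_intror (or_intror (or_introl eq_refl))))).
  - exact (M _ (or_intror (or_intror (or_intror (or_intror eq_refl))))).
Qed.

Inductive ladder_vertex := Src (n : nat) | Tgt (n : nat).

Definition ladder (l : label) (x y : ladder_vertex) : Prop :=
  match l, x, y with
  | Some 5, Src n, Tgt m => m = n
  | Some 6, Src n, Tgt m => m = S n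
  | Some 7, Src n, Tgt m => m = n /\ 1 <= n
  | Some 8, Src n, Tgt m => n = 0 /\ m = 0
  | None, Src n, Tgt m => n = 0 /\ m = 0
  | _, _, _ => False
  end.

Lemma ladder_green_graph : green_graph 8 ladder.
Proof.
  intros [n|] [x|x] [y|y]; try (intros; exact I);
    destruct n as [|[|[|[|[|[|[|[|[|n]]]]]]]]]; cbn; intros; try lia; contradiction.
Qed.

Lemma ladder_models : models ladder spider_rules.
Proof.
  intros r [-> | [-> | [-> | [-> | ->]]]]; cbn; intros x x'; split;
    intros [y [Hl Hr]];
    destruct x as [n|n], x' as [n'|n'], y as [k|k]; cbn in *; try contradiction;
    repeat match goal with h : _ /\ _ |- _ => destruct h end; subst; try lia;
    first
      [ exists (Tgt 0); cbn; intuition lia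
      | match goal with
        | n : nat |- _ =>
            first
              [ exists (Tgt n); cbn; intuition lia
              | exists (Tgt (S n)); cbn; intuition lia
              | exists (Src (S n)); cbn; intuition lia
              | exists (Src (pred n)); destruct n; cbn; intuition lia ]
        end ].
Qed.

Lemma spider_rules_not_lead : ~ leads_to_red_spider 8 spider_rules.
Proof.
  intro lead.
  assert (empty_edge : has_empty_edge ladder) by now exists (Src 0), (Tgt 0).
  destruct (lead _ _ ladder_green_graph ladder_models empty_edge)
    as [a [_ [b [H1 _]]]].
  destruct a, b; contradiction.
Qed.

Theorem theorem4 :
  exists s : nat, 0 < s /\
    exists T : rule -> Prop,
      (forall r, T r -> wf_rule s r) /\
      ~ leads_to_red_spider s T /\
      finitely_leads_to_red_spider s T.
Proof.
  exists 8; split; [lia|].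
  exists spider_rules.
  split; [exact spider_rules_wf|].
  split; [exact spider_rules_not_lead | exact spider_rules_finitely_lead].
Qed.
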